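(* Let $K=\mathbb{Q}(\rho)$, where $\rho$ is a root of $x^3-ax^2-(a+3)x-1$ with $a\equiv3$ or $21\pmod{27}$, $a>12$ and $\frac{a^2+3a+9}{27}$ square-free. Put $g_1=1$, $g_2=\rho$, $g_3=\frac{1+\rho+\rho^2}{3}$ and, for integers $v,r$, \[\alpha(v,r)=-(2v+1)g_1-(v(a+3)+r+1)g_2+(3v+2)g_3.\] Then: \begin{enumerate} \item $N(\alpha(v,r))<N(\alpha(v+1,r))$ for all $0\leq v\leq\frac{a-3}{9}-1$ and $\frac{a}{3}+2+v\leq r\leq\frac{2a}{3}-2v-3$; \item $N(\alpha(v,\frac{a}{3}+1+v))<N(\alpha(v+1,\frac{a}{3}+1+v+1))$ for all $0\leq v\leq\frac{a-3}{9}-1$; \item $N(\alpha(v,\frac{2a}{3}-2v-1))<N(\alpha(v+1,\frac{2a}{3}-2(v+1)-1))$ for all $0\leq v\leq\frac{a-3}{9}-2$; \item $N(\alpha(v,\frac{2a}{3}-2v-2))<N(\alpha(v+1,\frac{2a}{3}-2(v+1)-2))$ for all $0\leq v\leq\frac{a-3}{9}-2$. \end{enumerate}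
   Context: $N$ denotes the norm from $K$ to $\mathbb{Q}$. Note that the hypotheses imply $a\equiv 3\pmod 9$, so $\frac{a}{3}$ and $\frac{a-3}{9}$ are integers. *)

From HB Require Import structures.
From mathcomp Require Import all_boot all_order all_algebra.
Set Implicit Arguments. Unset Strict Implicit. Unset Printing Implicit Defensive.
Import Order.TTheory GRing.Theory Num.Theory.
Local Open Scope ring_scope.

Definition fpoly (a : int) : {poly rat} :=
  'X^3 - (a%:~R) *: 'X^2 - ((a + 3)%:~R) *: 'X - 1.

(* Matrix (row convention) of multiplication by rho on K = Q[x]/(fpoly a)
   in the Q-basis (1, rho, rho^2): rho*1 = rho, rho*rho = rho^2,
   rho*rho^2 = 1 + (a+3) rho + a rho^2.  This is the companion matrix of
   fpoly a (= companionmx [:: -1; -(a+3); -a; 1]). *)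
Definition Mrho (a : int) : 'M[rat]_3 :=
  \matrix_(i < 3, j < 3)
    if (i == 2%N :> nat)
    then [:: 1; (a + 3)%:~R; a%:~R]`_j
    else ((i.+1 == j :> nat)%:R : rat).

(* Norm N_{K/Q} of the element p(rho) of K, p in Q[x]: the determinant of
   the Q-linear map "multiplication by p(rho)" on K. *)
Definition normK (a : int) (p : {poly rat}) : rat :=
  \det (horner_mx (Mrho a) p).

Definition g1 : {poly rat} := 1.
Definition g2 : {poly rat} := 'X.
Definition g3 : {poly rat} := 3^-1 *: (1 + 'X + 'X^2).

Definition alpha (a v r : int) : {poly rat} :=
  - ((2 * v + 1)%:~R) *: g1 - ((v * (a + 3) + r + 1)%:~R) *: g2
  + ((3 * v + 2)%:~R) *: g3.

Definition squarefree_int (n : int) : Prop :=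
  forall d : int, (d * d %| n)%Z -> `|d| = 1.

From HB Require Import structures.
From mathcomp Require Import all_boot all_order all_algebra.
From mathcomp Require Import zify ring lra.
Import Order.TTheory GRing.Theory Num.Theory.
Local Open Scope ring_scope.

(* Since a = 3 (mod 9), write a = 9k + 3.  Expanding the determinant of
   multiplication by alpha(v, r) shows that its norm is an integer cubic
   polynomial in k, v and r.  Each claimed inequality then says that a difference
   of two values of this cubic is positive.  In the three boundary cases the
   difference is a quadratic in k and v, positive on the given range of v.  In
   the interior case it is a concave quadratic in r, so positivity on the whole
   range of r follows from positivity at its two endpoints. *)

Lemma det_mx3 (R : comNzRingType) (A : 'M[R]_3) :
  \det A = A 0 0 * (A 1 1 * A 2 2 - A 1 2 * A 2 1)
         - A 0 1 * (A 1 0 * A 2 2 - A 1 2 * A 2 0)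
         + A 0 2 * (A 1 0 * A 2 1 - A 1 1 * A 2 0).
Proof.
have -> : A = \matrix_(i < 3, j < 3) A (inord i) (inord j).
  by apply/matrixP => i j; rewrite mxE !inord_val.
rewrite (expand_det_row _ 0) !big_ord_recl big_ord0 /cofactor.
rewrite !(expand_det_row _ 0) !big_ord_recl !big_ord0 /cofactor !det_mx11 !mxE /=.
ring.
Qed.

Lemma concave_quadratic_gt0 (R : realDomainType) (c2 c1 c0 lo hi x : R) :
  c2 <= 0 -> lo <= x <= hi ->
  0 < c2 * lo ^+ 2 + c1 * lo + c0 -> 0 < c2 * hi ^+ 2 + c1 * hi + c0 ->
  0 < c2 * x ^+ 2 + c1 * x + c0.
Proof.
move=> c2_le0 /andP[]; rewrite le_eqVlt => /orP[/eqP <- // | lo_lt_x] x_le_hi q_lo q_hi.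
have hi_lo_gt0 : 0 < hi - lo by rewrite subr_gt0 (lt_le_trans lo_lt_x).
rewrite -(pmulr_rgt0 _ hi_lo_gt0).
(* Linear interpolation between lo and hi, corrected by a term of the sign of -c2. *)
have -> : (hi - lo) * (c2 * x ^+ 2 + c1 * x + c0) =
    (hi - x) * (c2 * lo ^+ 2 + c1 * lo + c0) + (x - lo) * (c2 * hi ^+ 2 + c1 * hi + c0)
    - c2 * ((x - lo) * (hi - x) * (hi - lo)) by ring.
have left_ge0 : 0 <= (hi - x) * (c2 * lo ^+ 2 + c1 * lo + c0).
  by rewrite mulr_ge0 ?subr_ge0 // ltW.
have right_gt0 : 0 < (x - lo) * (c2 * hi ^+ 2 + c1 * hi + c0).
  by rewrite mulr_gt0 ?subr_gt0.
have bump_le0 : c2 * ((x - lo) * (hi - x) * (hi - lo)) <= 0.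
  by apply: mulr_le0_ge0; rewrite // !mulr_ge0 //; lra.
lra.
Qed.

(* Row i holds the coordinates of rho^i (c0 + c1 rho + c2 rho^2) in the basis
   (1, rho, rho^2), reduced with rho^3 = 1 + (A + 3) rho + A rho^2. *)
Definition mul_rho_mx (A c0 c1 c2 : rat) : 'M[rat]_3 :=
  \matrix_(i < 3, j < 3)
    nth 0 (nth [::] [:: [:: c0; c1; c2];
                        [:: c2; c0 + (A + 3) * c2; c1 + A * c2];
                        [:: c1 + A * c2; (A + 3) * c1 + (1 + A * (A + 3)) * c2;
                            c0 + A * c1 + (A ^+ 2 + A + 3) * c2]] i) j.

Lemma horner_Mrho_quadratic (a : int) (c0 c1 c2 : rat) :
  horner_mx (Mrho a) (c0%:P + c1 *: 'X + c2 *: 'X^2) = mul_rho_mx a%:~R c0 c1 c2.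
Proof.
rewrite -!mul_polyC !rmorphD !rmorphM /= !horner_mx_C !horner_mx_X.
rewrite -!mulmxE !mul_scalar_mx.
apply/matrixP => i j; rewrite !mxE !big_ord_recl big_ord0 !mxE.
case: i => [[|[|[|i]]] ?] //; case: j => [[|[|[|j]]] ?] //=.
all: rewrite ?intrD; ring.
Qed.

Lemma alphaE (a v r : int) :
  alpha a v r = ((3 * v + 2)%:~R / 3 - (2 * v + 1)%:~R)%:P
    + ((3 * v + 2)%:~R / 3 - (v * (a + 3) + r + 1)%:~R) *: 'X
    + ((3 * v + 2)%:~R / 3) *: 'X^2.
Proof. by rewrite /alpha /g1 /g2 /g3 -!mul_polyC; ring. Qed.

Definition alpha_norm (k v r : int) : int :=
  - 162 * k ^+ 3 * v + 27 * k ^+ 2 * v ^+ 2 + 81 * k ^+ 2 * v * r - 225 * k ^+ 2 * v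
  - 18 * k ^+ 2 * r - 12 * k ^+ 2 - 9 * k * v ^+ 2 * r + 18 * k * v ^+ 2
  - 9 * k * v * r ^+ 2 + 81 * k * v * r - 108 * k * v + 9 * k * r ^+ 2 - 9 * k * r
  - 12 * k + v ^+ 3 - 3 * v ^+ 2 * r + 3 * v ^+ 2 - 6 * v * r ^+ 2 + 21 * v * r
  - 18 * v - r ^+ 3 + 3 * r ^+ 2 - 3.

Lemma normK_alpha (k v r : int) :
  normK (9 * k + 3) (alpha (9 * k + 3) v r) = (alpha_norm k v r)%:~R.
Proof.
rewrite /normK alphaE horner_Mrho_quadratic det_mx3 !mxE /= /alpha_norm.
by field.
Qed.

Lemma alpha_norm_lt_succ_v (k v r : int) :
  0 <= v -> 3 * k + 3 + v <= r <= 6 * k - 1 - 2 * v ->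
  alpha_norm k v r < alpha_norm k (v + 1) r.
Proof.
move=> v_ge0 r_range.
have v_le : v <= k - 2 by lia.
have prod_ge0 : 0 <= k * (v * (k - 2 - v)) by rewrite !mulr_ge0 //; lia.
rewrite -subr_gt0.
have -> : alpha_norm k (v + 1) r - alpha_norm k v r =
    (- 9 * k - 6) * r ^+ 2 + (81 * k ^+ 2 - 18 * k * v + 72 * k - 6 * v + 18) * r
    + (- 162 * k ^+ 3 + 54 * k ^+ 2 * v - 198 * k ^+ 2 + 36 * k * v - 90 * k
       + 3 * v ^+ 2 + 9 * v - 14) by rewrite /alpha_norm; ring.
have at_lo : 0 < 27 * k ^+ 2 * v + 45 * k ^+ 2 - 27 * k * v ^+ 2 - 54 * k * v - 9 * k
                 - 9 * v ^+ 2 - 27 * v - 14 by nia.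
have at_hi : 0 < 45 * k ^+ 2 - 18 * k * v - 9 * v ^+ 2 + 9 * k - 45 * v - 38 by nia.
apply: (@concave_quadratic_gt0 _ _ _ _ (3 * k + 3 + v) (6 * k - 1 - 2 * v));
  [lia | exact: r_range | lia | lia].
Qed.

Lemma alpha_norm_lt_lower_edge (k v r s : int) :
  0 <= v <= k - 1 -> r = 3 * k + 2 + v -> s = r + 1 ->
  alpha_norm k v r < alpha_norm k (v + 1) s.
Proof.
move=> v_range -> ->.
have prod_ge0 : 0 <= k * (v * (k - 1 - v)) by rewrite !mulr_ge0 //; lia.
rewrite -subr_gt0.
have -> : alpha_norm k (v + 1) (3 * k + 2 + v + 1) - alpha_norm k v (3 * k + 2 + v) =
    54 * k ^+ 2 * v + 54 * k ^+ 2 - 54 * k * v ^+ 2 - 54 * k * v - 27 * v ^+ 2 - 45 * v - 18.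
  by rewrite /alpha_norm; ring.
nia.
Qed.

Lemma alpha_norm_lt_upper_edge (k v r s : int) :
  0 <= v <= k - 2 -> r = 6 * k + 1 - 2 * v \/ r = 6 * k - 2 * v -> s = r - 2 ->
  alpha_norm k v r < alpha_norm k (v + 1) s.
Proof.
move=> v_range r_eq ->.
have prod_ge0 : 0 <= k * (v * (k - 2 - v)) by rewrite !mulr_ge0 //; lia.
rewrite -subr_gt0; case: r_eq => ->.
- have -> : alpha_norm k (v + 1) (6 * k + 1 - 2 * v - 2) - alpha_norm k v (6 * k + 1 - 2 * v) =
      54 * k ^+ 2 * v + 81 * k ^+ 2 - 54 * k * v ^+ 2 - 108 * k * v - 45 * k
      - 27 * v ^+ 2 - 63 * v - 36 by rewrite /alpha_norm; ring.
  nia.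
- have -> : alpha_norm k (v + 1) (6 * k - 2 * v - 2) - alpha_norm k v (6 * k - 2 * v) =
      54 * k ^+ 2 * v + 108 * k ^+ 2 - 54 * k * v ^+ 2 - 162 * k * v - 108 * k
      - 27 * v ^+ 2 - 81 * v - 54 by rewrite /alpha_norm; ring.
  nia.
Qed.

Theorem lemma7p3 (a : int) :
  ((a %% 27)%Z = 3 \/ (a %% 27)%Z = 21) ->
  12 < a ->
  squarefree_int ((a ^+ 2 + 3 * a + 9) %/ 27)%Z ->
  [/\ (forall v r : int,
         0 <= v <= ((a - 3) %/ 9)%Z - 1 ->
         (a %/ 3)%Z + 2 + v <= r <= ((2 * a) %/ 3)%Z - 2 * v - 3 ->
         normK a (alpha a v r) < normK a (alpha a (v + 1) r)),
      (forall v : int,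
         0 <= v <= ((a - 3) %/ 9)%Z - 1 ->
         normK a (alpha a v ((a %/ 3)%Z + 1 + v))
           < normK a (alpha a (v + 1) ((a %/ 3)%Z + 1 + v + 1))),
      (forall v : int,
         0 <= v <= ((a - 3) %/ 9)%Z - 2 ->
         normK a (alpha a v (((2 * a) %/ 3)%Z - 2 * v - 1))
           < normK a (alpha a (v + 1) (((2 * a) %/ 3)%Z - 2 * (v + 1) - 1))) &
      (forall v : int,
         0 <= v <= ((a - 3) %/ 9)%Z - 2 ->
         normK a (alpha a v (((2 * a) %/ 3)%Z - 2 * v - 2))
           < normK a (alpha a (v + 1) (((2 * a) %/ 3)%Z - 2 * (v + 1) - 2)))].
Proof.
move=> a_mod27 _ _.
have [k ->] : exists k, a = 9 * k + 3 by exists ((a - 3) %/ 9)%Z; lia.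
have -> : ((9 * k + 3 - 3) %/ 9)%Z = k by lia.
have -> : ((9 * k + 3) %/ 3)%Z = 3 * k + 1 by lia.
have -> : ((2 * (9 * k + 3)) %/ 3)%Z = 6 * k + 2 by lia.
split=> [v r v_range r_range | v v_range | v v_range | v v_range];
  rewrite !normK_alpha ltr_int.
- by apply: alpha_norm_lt_succ_v; lia.
- by apply: alpha_norm_lt_lower_edge; lia.
- by apply: alpha_norm_lt_upper_edge; lia.
- by apply: alpha_norm_lt_upper_edge; lia.
Qed.
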